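(* Let $n, C_1, C_2$ be positive constants with $C_2 > 1$, and let $f:[0,+\infty)\to[0,+\infty)$ be a monotonically increasing nonnegative function satisfying $$f(r) \le C_1 r^n f\!\left(\tfrac{r}{2}\right) \quad \text{for all } r \in [C_2,+\infty).$$ Then there is a positive constant $C_3$, depending only on $n, C_1, C_2$ and $f(C_2)$, such that $$f(r) \le C_3\, e^{2n(\log r)^2} \quad \text{for all } r \in [C_2,+\infty).$$ *)

From Stdlib Require Export Reals.
Open Scope R_scope.

(* Iterating [f r <= C1 r^n f (r/2)] about [log2 r] times, with each factor bounded by
   [B = (C1 + 1) r^n], gives [f r <= f C2 * B^k] with [k <= log r / log 2 + 1], so
   [log f r <= (log r / log 2 + 1) (log (C1 + 1) + n log r) + O(1)].  The leading
   coefficient [n / log 2] is strictly below [2 n] because [log 2 > 1/2], so the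
   remaining linear term is absorbed by [2 n (log r)^2] up to a constant. *)

From Stdlib Require Import Reals ZArith Lra Psatz.
Open Scope R_scope.

Lemma exp_le_compat (x y : R) : x <= y -> exp x <= exp y.
Proof. intros [Hlt | ->]; [now left; apply exp_increasing | lra]. Qed.

Lemma ln_ge_0 (x : R) : 1 <= x -> 0 <= ln x.
Proof.
  intros [Hlt | <-]; [| now rewrite ln_1; lra].
  rewrite <- ln_1; left; apply ln_increasing; lra.
Qed.

Lemma Rpower_ge_1 (x y : R) : 1 <= x -> 0 <= y -> 1 <= Rpower x y.
Proof. intros Hx Hy; rewrite <- (Rpower_O x) by lra; now apply Rle_Rpower. Qed.

Lemma pow_le_exp (B E : R) (k : nat) : 0 < B -> INR k * ln B <= E -> B ^ k <= exp E.
Proof. intros HB HE; rewrite <- Rpower_pow by exact HB; now apply exp_le_compat. Qed.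

Lemma quadratic_le_const_add_larger_quadratic (p q b d : R) :
  p < q -> exists K, forall L, p * L ^ 2 + b * L + d <= K + q * L ^ 2.
Proof.
  intros Hpq.
  exists (d + b ^ 2 / (4 * (q - p))); intros L.
  assert (Hsq : 0 <= (q - p) * (L - b / (2 * (q - p))) ^ 2)
    by (apply Rmult_le_pos; [lra | apply pow2_ge_0]).
  assert (Hid : (q - p) * (L - b / (2 * (q - p))) ^ 2
                = (d + b ^ 2 / (4 * (q - p)) + q * L ^ 2) - (p * L ^ 2 + b * L + d))
    by (field; lra).
  lra.
Qed.

Lemma exists_pow2_ge_log2_bound (r : R) :
  1 <= r -> exists k : nat, r <= 2 ^ k /\ INR k <= ln r / ln 2 + 1.
Proof.
  intros Hr.
  set (x := ln r / ln 2).
  assert (Hln2 : 0 < ln 2) by (pose proof ln_lt_2; lra).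
  assert (Hx : 0 <= x) by (apply Rmult_le_pos; [apply ln_ge_0 | left; apply Rinv_0_lt_compat]; lra).
  destruct (archimed x) as [Hup_gt Hup_le].
  assert (Hup : (0 <= up x)%Z) by (apply Z.lt_le_incl, lt_0_IZR; lra).
  exists (Z.to_nat (up x)).
  assert (Hk : INR (Z.to_nat (up x)) = IZR (up x))
    by now rewrite INR_IZR_INZ, Z2Nat.id.
  split; [| lra].
  rewrite <- Rpower_pow, Hk by lra.
  rewrite <- (exp_ln r) at 1 by lra.
  unfold Rpower; apply Rlt_le, exp_increasing.
  replace (ln r) with (x * ln 2) by (unfold x; field; lra).
  apply Rmult_lt_compat_r; lra.
Qed.

Section DoublingIteration.

Variables (f : R -> R) (r0 s B : R).
Hypothesis f_nonneg : forall x, 0 <= x -> 0 <= f x.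
Hypothesis f_mono : forall x y, 0 <= x -> x <= y -> f x <= f y.
Hypothesis r0_nonneg : 0 <= r0.
Hypothesis B_ge1 : 1 <= B.
Hypothesis f_doubling : forall r, r0 < r <= s -> f r <= B * f (r / 2).

Lemma le_pow_mul_doubling (k : nat) :
  forall r, 0 <= r <= s -> r <= 2 ^ k * r0 -> f r <= B ^ k * f r0.
Proof.
  induction k as [| k IH]; intros r Hr Hrk.
  - rewrite pow_O, Rmult_1_l; apply f_mono; lra.
  - assert (Hf0 : 0 <= f r0) by now apply f_nonneg.
    destruct (Rle_lt_dec r r0) as [Hle | Hgt].
    + assert (f r <= f r0) by (apply f_mono; lra).
      assert (1 <= B ^ S k) by now apply pow_R1_Rle.
      nra.
    + assert (Hhalf : f (r / 2) <= B ^ k * f r0) by (apply IH; simpl in Hrk; lra).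
      assert (f r <= B * f (r / 2)) by (apply f_doubling; lra).
      simpl; nra.
Qed.

End DoublingIteration.

Lemma pow_mul_Rpower_le_exp_sq (n M : R) : 0 < n -> 1 <= M ->
  exists K, forall (r : R) (k : nat), 1 <= r -> INR k <= ln r / ln 2 + 1 ->
    (M * Rpower r n) ^ k <= exp K * exp (2 * n * ln r ^ 2).
Proof.
  intros Hn HM.
  set (c := ln 2); assert (Hc : / 2 < c) by apply ln_lt_2.
  set (m := ln M); assert (Hm : 0 <= m) by now apply ln_ge_0.
  assert (Hlead : n / c < 2 * n).
  { apply Rmult_lt_reg_r with c; [lra |].
    unfold Rdiv; rewrite Rmult_assoc, Rinv_l by lra; nra. }
  destruct (quadratic_le_const_add_larger_quadratic _ _ (m / c + n) m Hlead) as [K HK].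
  exists K; intros r k Hr Hk.
  set (L := ln r); assert (HL : 0 <= L) by now apply ln_ge_0.
  assert (Hrn : 1 <= Rpower r n) by (apply Rpower_ge_1; lra).
  rewrite <- exp_plus; apply pow_le_exp; [nra |].
  assert (Hln : ln (M * Rpower r n) = m + n * L)
    by (rewrite ln_mult, ln_Rpower by lra; unfold m, L; ring).
  rewrite Hln.
  assert (Hk_coeff : INR k * (m + n * L) <= (L / c + 1) * (m + n * L))
    by (apply Rmult_le_compat_r; [nra | exact Hk]).
  assert (Hexpand : (L / c + 1) * (m + n * L) = n / c * L ^ 2 + (m / c + n) * L + m)
    by (field; lra).
  specialize (HK L); lra.
Qed.

Theorem lemma2p1 :
  forall (n C1 C2 a : R), 0 < n -> 0 < C1 -> 1 < C2 ->
  exists C3 : R, 0 < C3 /\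
    forall f : R -> R,
      (forall x, 0 <= x -> 0 <= f x) ->
      (forall x y, 0 <= x -> x <= y -> f x <= f y) ->
      (forall r, C2 <= r -> f r <= C1 * Rpower r n * f (r / 2)) ->
      f C2 = a ->
      forall r, C2 <= r -> f r <= C3 * exp (2 * n * (ln r) ^ 2).
Proof.
  intros n C1 C2 a Hn HC1 HC2.
  destruct (pow_mul_Rpower_le_exp_sq n (C1 + 1) Hn) as [K HK]; [lra |].
  exists (Rmax a 1 * exp K); split.
  { apply Rmult_lt_0_compat; [pose proof (Rmax_r a 1) | apply exp_pos]; lra. }
  intros f Hpos Hmono Hrec Ha r Hr.
  destruct (exists_pow2_ge_log2_bound r) as [k [Hr2k Hk]]; [lra |].
  set (B := (C1 + 1) * Rpower r n).
  assert (Hrn : 1 <= Rpower r n) by (apply Rpower_ge_1; lra).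
  assert (HfB : f r <= B ^ k * a).
  { rewrite <- Ha; apply (le_pow_mul_doubling f C2 r); [exact Hpos | exact Hmono | lra | | | lra |].
    - unfold B; nra.
    - intros s Hs.
      assert (Rpower s n <= Rpower r n) by (apply Rle_Rpower_l; lra).
      assert (C1 * Rpower s n <= B) by (unfold B; nra).
      apply Rle_trans with (C1 * Rpower s n * f (s / 2)); [apply Hrec; lra |].
      apply Rmult_le_compat_r; [apply Hpos |]; lra.
    - assert (1 <= 2 ^ k) by (apply pow_R1_Rle; lra); nra. }
  assert (Ha0 : 0 <= a) by (rewrite <- Ha; apply Hpos; lra).
  apply Rle_trans with (B ^ k * a); [exact HfB |].
  rewrite Rmult_comm, Rmult_assoc.
  apply Rmult_le_compat; [lra | apply pow_le; unfold B; nra | apply Rmax_l | apply HK; lra].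
Qed.
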